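(* Let $d\ge1$ and let $\sigma\subset\mathbb{R}^d$ be an object with center $c$ and width $w\ge 1$. Let $i=\lfloor\log_2 w\rfloor$. For each $j\in[d]$ write uniquely $c(x_j)=z_j+f_j$ with $z_j\in 2^{i+1}\mathbb{Z}$ and $f_j\in[0,2^{i+1})$, and define the point $r\in(2^{i+1}\mathbb{Z})^d$ by $r(x_j)=z_j$ if $f_j\in[0,2^i)$ and $r(x_j)=z_j+2^{i+1}$ if $f_j\in[2^i,2^{i+1})$. Then $r\in\sigma$.
   Context: An object is a compact subset of $\mathbb{R}^d$ with non-empty interior; $\partial\sigma$ is its boundary; $d_\infty$ is the $L_\infty$ distance; $p(x_j)$ is the $j$th coordinate of $p$; $\beta\mathbb{Z}=\{\beta z:z\in\mathbb{Z}\}$. For $x\in\sigma$, $\alpha(x)=\min_{y\in\partial\sigma}d_\infty(x,y)/\max_{y\in\partial\sigma}d_\infty(x,y)$; a center of $\sigma$ is a point $c\in\sigma$ maximizing $\alpha(x)$ over $x\in\sigma$, and the width of $\sigma$ is $\min_{y\in\partial\sigma}d_\infty(c,y)$. *)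

(* Points of R^d are row vectors 'rV[R]_d, with the
   library's (product) topology on matrices. *)
From HB Require Import structures.
From mathcomp Require Import all_boot all_order all_algebra.
From mathcomp Require Import all_classical all_reals all_analysis.
Set Implicit Arguments. Unset Strict Implicit. Unset Printing Implicit Defensive.
Import Order.TTheory GRing.Theory Num.Theory.
Import numFieldNormedType.Exports.
Local Open Scope classical_set_scope.
Local Open Scope ring_scope.

Section Defs.
Variables (R : realType) (d : nat).
Implicit Types (sigma : set 'rV[R]_d) (x y : 'rV[R]_d).

Definition dinf x y : R := \big[Num.max/0]_(j < d) `|x ord0 j - y ord0 j|.

Definition is_object sigma := compact sigma /\ interior sigma !=set0.

Definition boundary sigma := closure sigma `\` interior sigma.

Definition mindist sigma x : R := inf [set dinf x y | y in boundary sigma].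
Definition maxdist sigma x : R := sup [set dinf x y | y in boundary sigma].

Definition alpha sigma x : R := mindist sigma x / maxdist sigma x.

Definition is_center sigma c := sigma c /\ forall x, sigma x -> alpha sigma x <= alpha sigma c.

Definition width_at sigma c : R := mindist sigma c.
End Defs.

From HB Require Import structures.
From mathcomp Require Import all_boot all_order all_algebra.
From mathcomp Require Import all_classical all_reals all_analysis.
From mathcomp Require Import lra.
Import Order.TTheory GRing.Theory Num.Theory.
Import numFieldNormedType.Exports.
Local Open Scope classical_set_scope.
Local Open Scope ring_scope.

(* Rounding each coordinate of the center c to a nearest multiple of 2^(i+1)
   moves it by at most 2^i <= w, so r lies in the closed L_oo ball of radius w
   around c.  That ball lies in the closed set sigma: c is interior (it is at
   distance 0 < w from itself, hence not on the boundary), and every point of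
   the segment from c to r other than r is at distance < w from c, hence off the
   boundary.  So if r were outside the closure of sigma, the whole segment would
   avoid the boundary and, being connected, stay in the interior of sigma. *)

Lemma connected_closure_sub_interior {T : topologicalType} {A K : set T} :
  connected K -> K `&` A° !=set0 -> (forall x, K x -> closure A x -> A° x) ->
  K `<=` A°.
Proof.
move=> Kc [x0 Kx0] Kcl.
suff -> : K = K `&` A° by move=> x [].
apply/esym/Kc; first by exists x0.
- by exists A° => //; exact: open_interior.
- exists (closure A); first exact: closed_closure.
  apply/seteqP; split=> x [Kx Ax]; split=> //; last exact: Kcl.
  exact: subset_closure (interior_subset Ax).
Qed.

Lemma line_segment_connected {R : realType} {V : normedModType R} (c r : V) :
  connected [set c + t *: (r - c) | t in `[0, 1]].
Proof.
apply: connected_continuous_connected; first exact: segment_connected.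
apply: continuous_subspaceT => t.
apply: (@continuousD R _ R (fun=> c) (fun t => t *: (r - c))).
  exact: cst_continuous.
exact/continuousZr_tmp/cvg_id.
Qed.

Lemma dist_round_le (R : realFieldType) (h a f x : R) :
  0 <= f < 2 * h -> (f < h -> x = a) -> (h <= f -> x = a + 2 * h) ->
  `|a + f - x| <= h.
Proof.
move=> /andP[f0 f2h] lo hi; rewrite ler_norml.
by case: (ltP f h) => hf; [rewrite lo | rewrite hi]; rewrite // ?hf; lra.
Qed.

Section LinftyBall.
Context {R : realType} {d : nat}.
Implicit Types (sigma : set 'rV[R]_d) (c r x y : 'rV[R]_d).

Lemma dinf_ge0 x y : 0 <= dinf x y.
Proof. by rewrite /dinf; elim/big_ind: _ => // a b a0 _; rewrite le_max a0. Qed.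

Lemma dinf_le x y (B : R) :
  0 <= B -> (forall j, `|x ord0 j - y ord0 j| <= B) -> dinf x y <= B.
Proof.
move=> B0 xyB; rewrite /dinf.
by elim/big_ind: _ => // a b; rewrite ge_max => ->.
Qed.

Lemma coord_le_dinf x y j : `|x ord0 j - y ord0 j| <= dinf x y.
Proof.
rewrite /dinf; apply: (le_bigmax_seq 0 j xpredT) => //.
exact: mem_index_enum.
Qed.

Lemma dinf_segment c r (t : R) :
  0 <= t -> dinf c (c + t *: (r - c)) <= t * dinf c r.
Proof.
move=> t0; apply: dinf_le => [|j]; first exact/mulr_ge0/dinf_ge0.
rewrite !mxE opprD addrA subrr sub0r normrN normrM ger0_norm // distrC.
exact/ler_wpM2l/coord_le_dinf.
Qed.

Lemma mindist_le_dinf {sigma} c {y} :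
  boundary sigma y -> mindist sigma c <= dinf c y.
Proof.
move=> yb; apply: ge_inf; last by exists y.
by exists 0 => _ [z _ <-]; exact: dinf_ge0.
Qed.

Lemma dinf_le_mindist_mem {sigma c r} :
  closed sigma -> sigma c -> 0 < mindist sigma c ->
  dinf c r <= mindist sigma c -> sigma r.
Proof.
set w := mindist sigma c => scl sc w0 crw.
have close_interior y : closure sigma y -> dinf c y < w -> sigma° y.
  move=> ycl cyw; apply: contrapT => yni.
  by have := mindist_le_dinf c (conj ycl yni); rewrite -/w leNgt cyw.
have [rcl|rncl] := pselect (closure sigma r).
  by rewrite (closure_id sigma).1.
have cint : sigma° c.
  apply: close_interior; first exact: subset_closure.
  by apply: le_lt_trans w0; apply: dinf_le => // j; rewrite subrr normr0.
apply: interior_subset.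
apply: (connected_closure_sub_interior (line_segment_connected c r)).
- exists c; split=> //; exists 0; last by rewrite scale0r addr0.
  by rewrite /= in_itv /= lexx ler01.
- move=> _ [t + <-] xcl; rewrite /= in_itv /= => /andP[t0 t1].
  apply: close_interior => //.
  have [t1E|tn1] := eqVneq t 1; first by rewrite t1E scale1r addrC subrK in xcl.
  have t_lt1 : t < 1 by rewrite lt_neqAle tn1.
  apply: le_lt_trans (dinf_segment c r t t0) _.
  by apply: le_lt_trans (ler_wpM2l t0 crw) _; rewrite gtr_pMl.
- exists 1; last by rewrite scale1r addrC subrK.
  by rewrite /= in_itv /= lexx ler01.
Qed.

End LinftyBall.

Theorem lemma5 (R : realType) (d : nat) (hd : (0 < d)%N)
  (sigma : set 'rV[R]_d) (c : 'rV[R]_d) (i : nat) (r : 'rV[R]_d) :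
  is_object sigma ->
  is_center sigma c ->
  1 <= width_at sigma c ->
  (* i = floor (log_2 w) *)
  (2 ^+ i <= width_at sigma c /\ width_at sigma c < 2 ^+ i.+1) ->
  (forall j : 'I_d, exists (z : int) (f : R),
      c ord0 j = z%:~R * 2 ^+ i.+1 + f /\ 0 <= f < 2 ^+ i.+1 /\
      (f < 2 ^+ i -> r ord0 j = z%:~R * 2 ^+ i.+1) /\
      (2 ^+ i <= f -> r ord0 j = z%:~R * 2 ^+ i.+1 + 2 ^+ i.+1)) ->
  sigma r.
Proof.
move=> [sigma_cpt _] [sc _] w1 [iw _] round_r.
have sigma_closed := compact_closed (@norm_hausdorff _ _) sigma_cpt.
apply: (dinf_le_mindist_mem sigma_closed sc).
  exact: lt_le_trans ltr01 w1.
apply: le_trans iw; apply: dinf_le => [|j]; first exact: exprn_ge0.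
have [z [f [-> [f_range [lo hi]]]]] := round_r j.
by rewrite exprS in f_range lo hi *; exact: dist_round_le.
Qed.
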